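(* For $\mathcal{E}\in(0,1)$ let $\ell=\pi/T_0$ and $U(z)=u_0(z/\ell)$, so that $U$ is odd, $2\pi$-periodic, $U'(0)>0$, and $\ell^2U''+U-U^3=0$, $\ell^2(U')^2=\frac12[(1-U^2)^2-\mathcal{E}^2]$. Let $a=\frac1\pi\int_0^{2\pi}U(z)\sin z\,dz$. Then, as $\mathcal{E}\to1$, the map $\mathcal{E}\mapsto(\ell,U)\in\mathbb{R}\times H^2_{\rm per}(0,2\pi)$ is uniquely parametrized by the small parameter $a>0$, and $$\mathcal{E}=1-a^2+\mathcal{O}(a^4),\qquad \ell^2=1-\tfrac34a^2+\mathcal{O}(a^4),\qquad U=a\sin(\cdot)+\mathcal{O}_{H^2_{\rm per}(0,2\pi)}(a^3).$$
   Context: For $\mathcal{E}\in(0,1)$, $u_0(x)=\sqrt{1-\mathcal{E}}\,\mathrm{sn}\big(x\sqrt{(1+\mathcal{E})/2},\,k\big)$ with $k=\sqrt{(1-\mathcal{E})/(1+\mathcal{E})}$ (Jacobi elliptic function of modulus $k$); it is odd with $u_0'(0)>0$, satisfies $u_0''+u_0-u_0^3=0$, $(u_0')^2=\frac12[(1-u_0^2)^2-\mathcal{E}^2]$, and has minimal period $2T_0=4\sqrt{2/(1+\mathcal{E})}\,K(k)$, $K$ the complete elliptic integral of the first kind. *)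

From Stdlib Require Import Reals Lra ClassicalEpsilon.
From Coquelicot Require Import Coquelicot.
Open Scope R_scope.

Definition ellF (k phi : R) : R :=
  RInt (fun t => / sqrt (1 - k ^ 2 * sin t ^ 2)) 0 phi.

Definition ellK (k : R) : R := ellF k (PI / 2).

(* Jacobi amplitude: am(x,k) is the phi with F(phi,k) = x
   (unique for 0 <= k < 1, since F(.,k) is an increasing bijection of R). *)
Definition jam (x k : R) : R :=
  epsilon (inhabits 0) (fun phi => ellF k phi = x).

Definition jsn (x k : R) : R := sin (jam x k).

Definition kmod (E : R) : R := sqrt ((1 - E) / (1 + E)).

Definition u0 (E x : R) : R :=
  sqrt (1 - E) * jsn (x * sqrt ((1 + E) / 2)) (kmod E).

Definition T0 (E : R) : R := 2 * sqrt (2 / (1 + E)) * ellK (kmod E).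

Definition ell (E : R) : R := PI / T0 E.

Definition U (E z : R) : R := u0 E (z / ell E).

Definition acoef (E : R) : R := / PI * RInt (fun z => U E z * sin z) 0 (2 * PI).

Definition H2per_norm (f : R -> R) : R :=
  sqrt (RInt (fun z => f z ^ 2 + Derive f z ^ 2 + Derive_n f 2 z ^ 2) 0 (2 * PI)).

(* Write E = 1 - e^2, so that k^2 = e^2 / (2 - e^2), and let c = 2 K(k) / pi.  Unfolding the
   definitions, U(z) = e sin(phi(z)) with phi(z) = am(c z, k), and ell^2 = (1 - e^2/2) / c^2.
   The integrand of F(., k) is 1 + k^2 sin^2 / 2 + O(k^4), so F(., k) and its inverse am(., k)
   are O(k^2)-perturbations of the identity and c = 1 + k^2/4 + O(k^4).  Hence phi(z) = z + O(e^2),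
   a = e (1 + O(e^2)), E = 1 - a^2 + O(a^4) and ell^2 = 1 - 3/4 a^2 + O(a^4); differentiating
   twice, U - a sin and its first two derivatives are O(e^3) uniformly.  Finally phi depends
   Lipschitz-continuously on k^2, which makes e |-> a strictly increasing and continuous, hence a
   bijection from a neighbourhood of 0 onto one. *)

From Stdlib Require Import Reals Lra ClassicalEpsilon.
From Coquelicot Require Import Coquelicot.
Open Scope R_scope.

Lemma sin_sqr_bound t : 0 <= sin t ^ 2 <= 1.
Proof. pose proof (SIN_bound t). nra. Qed.

Lemma Rabs_sin_le_1 x : Rabs (sin x) <= 1.
Proof. apply Rabs_le, SIN_bound. Qed.

Lemma Rabs_cos_le_1 x : Rabs (cos x) <= 1.
Proof. apply Rabs_le, COS_bound. Qed.

Lemma sin_lipschitz a b : Rabs (sin a - sin b) <= Rabs (a - b).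
Proof.
  destruct (MVT_abs sin cos b a) as [c [Hc _]].
  { intros; apply derivable_pt_lim_sin. }
  rewrite Hc. pose proof (Rabs_cos_le_1 c). pose proof (Rabs_pos (a - b)). nra.
Qed.

Lemma cos_lipschitz a b : Rabs (cos a - cos b) <= Rabs (a - b).
Proof.
  destruct (MVT_abs cos (fun x => - sin x) b a) as [c [Hc _]].
  { intros; apply derivable_pt_lim_cos. }
  rewrite Hc, Rabs_Ropp. pose proof (Rabs_sin_le_1 c). pose proof (Rabs_pos (a - b)). nra.
Qed.

Lemma PI_bounds : 3 < PI <= 4.
Proof. pose proof PI2_3_2. pose proof PI_4. lra. Qed.

Lemma sqr_le_of_Rabs_le y M : Rabs y <= M -> y ^ 2 <= M ^ 2.
Proof.
  intros Hy. rewrite <- (pow2_abs y). apply pow_incr. split; [apply Rabs_pos | exact Hy].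
Qed.

Lemma continuous_of_ex_derive (f : R -> R) x : ex_derive f x -> continuous f x.
Proof. apply (ex_derive_continuous (K := R_AbsRing) (V := R_NormedModule)). Qed.

Lemma ex_RInt_of_continuous (f : R -> R) a b : (forall t, continuous f t) -> ex_RInt f a b.
Proof. intros; apply (ex_RInt_continuous (V := R_CompleteNormedModule)); auto. Qed.

Lemma RInt_minus_R (f g : R -> R) a b : ex_RInt f a b -> ex_RInt g a b ->
  RInt (fun x => f x - g x) a b = RInt f a b - RInt g a b.
Proof. intros; apply (RInt_minus (V := R_CompleteNormedModule)); auto. Qed.

Lemma RInt_const_R (a b c : R) : RInt (fun _ : R => c) a b = (b - a) * c.
Proof. exact (RInt_const (V := R_CompleteNormedModule) a b c). Qed.

Lemma RInt_scal_R (f : R -> R) c a b : ex_RInt f a b ->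
  RInt (fun x => c * f x) a b = c * RInt f a b.
Proof. exact (RInt_scal (V := R_CompleteNormedModule) f a b c). Qed.

Lemma RInt_ext_R (f g : R -> R) a b : (forall x, f x = g x) -> RInt f a b = RInt g a b :> R.
Proof. intros H. apply RInt_ext. intros x _. apply H. Qed.

Lemma RInt_le_continuous (f g : R -> R) a b : a <= b ->
  (forall t, continuous f t) -> (forall t, continuous g t) ->
  (forall t, a <= t <= b -> f t <= g t) -> RInt f a b <= RInt g a b.
Proof.
  intros Hab Hf Hg Hfg. apply RInt_le; auto using ex_RInt_of_continuous.
  intros; apply Hfg; lra.
Qed.

Lemma abs_RInt_le_bound (f : R -> R) a b M : (forall t, continuous f t) ->
  (forall t, Rmin a b <= t <= Rmax a b -> Rabs (f t) <= M) ->
  Rabs (RInt f a b) <= M * Rabs (b - a).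
Proof.
  intros Hc Hb. destruct (Rle_dec a b) as [H | H].
  - rewrite (Rabs_right (b - a)) by lra. rewrite Rmult_comm.
    apply abs_RInt_le_const; auto using ex_RInt_of_continuous.
    intros t Ht; apply Hb; rewrite Rmin_left, Rmax_right; lra.
  - rewrite <- (opp_RInt_swap (V := R_CompleteNormedModule)) by auto using ex_RInt_of_continuous.
    unfold opp; simpl. rewrite Rabs_Ropp, (Rabs_left (b - a)) by lra.
    replace (- (b - a)) with (a - b) by ring. rewrite Rmult_comm.
    apply abs_RInt_le_const; auto using ex_RInt_of_continuous; [lra |].
    intros t Ht; apply Hb; rewrite Rmin_right, Rmax_left; lra.
Qed.

Lemma RInt_sin_sqr b : RInt (fun t => sin t ^ 2) 0 b = (b - sin b * cos b) / 2.
Proof.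
  apply is_RInt_unique.
  replace ((b - sin b * cos b) / 2) with
    (minus ((fun t => (t - sin t * cos t) / 2) b) ((fun t => (t - sin t * cos t) / 2) 0))
    by (unfold minus, plus, opp; simpl; rewrite sin_0; lra).
  apply (is_RInt_derive (V := R_CompleteNormedModule) (fun t => (t - sin t * cos t) / 2)).
  - intros x _. auto_derive; auto. pose proof (sin2 x) as Hs2. unfold Rsqr in Hs2. nra.
  - intros x _. apply continuous_of_ex_derive. auto_derive. auto.
Qed.

(** * The elliptic integral of the first kind *)

Definition ellF_integrand (m t : R) : R := / sqrt (1 - m * sin t ^ 2).

Definition ellFm (m x : R) : R := RInt (ellF_integrand m) 0 x.

Lemma ellF_ellFm k x : ellF k x = ellFm (k ^ 2) x.
Proof. reflexivity. Qed.

Lemma ellFm_0 m : ellFm m 0 = 0.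
Proof. unfold ellFm. rewrite RInt_point. reflexivity. Qed.

Section EllipticIntegral.
Variable m : R.
Hypothesis Hm : 0 <= m <= 1/2.

Lemma ellF_integrand_bounds t :
  1 + m * sin t ^ 2 / 2 <= ellF_integrand m t <= 1 + m * sin t ^ 2 / 2 + (m * sin t ^ 2) ^ 2
  /\ ellF_integrand m t <= 1 + m * sin t ^ 2.
Proof.
  pose proof (sin_sqr_bound t). unfold ellF_integrand.
  set (y := m * sin t ^ 2).
  assert (Hy : 0 <= y <= 1/2) by (unfold y; nra).
  assert (Hq : 0 < sqrt (1 - y)) by (apply sqrt_lt_R0; lra).
  assert (Hq2 : sqrt (1 - y) * sqrt (1 - y) = 1 - y) by (apply sqrt_sqrt; lra).
  set (q := sqrt (1 - y)) in *.
  assert (q <= 1) by nra.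
  repeat split; apply (Rmult_le_reg_r q); auto; rewrite Rinv_l by (apply Rgt_not_eq; lra); nra.
Qed.

Lemma ellF_integrand_range t : 1 <= ellF_integrand m t <= 2.
Proof. pose proof (ellF_integrand_bounds t). pose proof (sin_sqr_bound t). nra. Qed.

Lemma ellF_integrand_near_1 t : Rabs (ellF_integrand m t - 1) <= m.
Proof.
  pose proof (ellF_integrand_bounds t). pose proof (sin_sqr_bound t).
  rewrite Rabs_right; nra.
Qed.

Lemma ellF_integrand_taylor t :
  Rabs (ellF_integrand m t - 1 - m * sin t ^ 2 / 2) <= m ^ 2.
Proof.
  pose proof (ellF_integrand_bounds t). pose proof (sin_sqr_bound t).
  assert (0 <= m * sin t ^ 2 <= m) by nra.
  assert ((m * sin t ^ 2) ^ 2 <= m ^ 2) by nra.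
  rewrite Rabs_right; nra.
Qed.

Lemma ellF_integrand_continuous t : continuous (ellF_integrand m) t.
Proof.
  apply continuous_of_ex_derive. unfold ellF_integrand. pose proof (sin_sqr_bound t).
  auto_derive. repeat split; try nra. apply Rgt_not_eq, sqrt_lt_R0. nra.
Qed.

Lemma ex_RInt_ellF_integrand a b : ex_RInt (ellF_integrand m) a b.
Proof. apply ex_RInt_of_continuous, ellF_integrand_continuous. Qed.

Lemma ellFm_derive x : is_derive (ellFm m) x (ellF_integrand m x).
Proof.
  apply (is_derive_RInt (V := R_CompleteNormedModule) _ _ 0).
  - apply filter_forall. intros y.
    apply (RInt_correct (V := R_CompleteNormedModule)), ex_RInt_ellF_integrand.
  - apply ellF_integrand_continuous.
Qed.

Lemma ellFm_continuity : continuity (ellFm m).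
Proof.
  intros x. apply continuity_pt_filterlim, continuous_of_ex_derive.
  eexists; apply ellFm_derive.
Qed.

Lemma ellFm_sub a b : ellFm m b - ellFm m a = RInt (ellF_integrand m) a b.
Proof.
  assert (H : RInt (ellF_integrand m) 0 a + RInt (ellF_integrand m) a b
              = RInt (ellF_integrand m) 0 b)
    by (apply (RInt_Chasles (V := R_CompleteNormedModule)); apply ex_RInt_ellF_integrand).
  unfold ellFm. lra.
Qed.

Lemma ellFm_increment a b : a <= b -> b - a <= ellFm m b - ellFm m a <= 2 * (b - a).
Proof.
  intros Hab. rewrite ellFm_sub. split.
  - replace (b - a) with (RInt (fun _ : R => 1) a b)
      by (rewrite RInt_const_R; apply Rmult_1_r).
    apply RInt_le_continuous; auto using ellF_integrand_continuous.
    + intros; apply continuous_const.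
    + intros; apply ellF_integrand_range.
  - replace (2 * (b - a)) with (RInt (fun _ : R => 2) a b)
      by (rewrite RInt_const_R; apply Rmult_comm).
    apply RInt_le_continuous; auto using ellF_integrand_continuous.
    + intros; apply continuous_const.
    + intros; apply ellF_integrand_range.
Qed.

Lemma ellFm_expansive a b : Rabs (a - b) <= Rabs (ellFm m a - ellFm m b).
Proof.
  destruct (Rle_dec a b).
  - pose proof (ellFm_increment a b r). rewrite !Rabs_left1; lra.
  - pose proof (ellFm_increment b a ltac:(lra)). rewrite !Rabs_right; lra.
Qed.

Lemma ellFm_surjective x : exists p, ellFm m p = x.
Proof.
  pose proof (Rabs_pos x). pose proof (Rle_abs x). pose proof (Rle_abs (- x)).
  rewrite Rabs_Ropp in *.
  destruct (IVT_gen (ellFm m) (- Rabs x) (Rabs x) x ellFm_continuity) as [p [_ Hp]].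
  - pose proof (ellFm_increment (- Rabs x) 0 ltac:(lra)).
    pose proof (ellFm_increment 0 (Rabs x) ltac:(lra)).
    rewrite ellFm_0 in *.
    split; [eapply Rle_trans; [apply Rmin_l | lra] | eapply Rle_trans; [| apply Rmax_r]; lra].
  - exists p; exact Hp.
Qed.

Lemma ellFm_near_id x : Rabs (ellFm m x - x) <= m * Rabs x.
Proof.
  replace (ellFm m x - x) with (RInt (fun t => ellF_integrand m t - 1) 0 x).
  2:{ rewrite RInt_minus_R, RInt_const_R; auto using ex_RInt_ellF_integrand, ex_RInt_const.
      unfold ellFm. simpl. ring. }
  replace (Rabs x) with (Rabs (x - 0)) by (f_equal; ring).
  apply abs_RInt_le_bound.
  - intros; apply (continuous_minus (V := R_NormedModule));
      [apply ellF_integrand_continuous | apply continuous_const].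
  - intros; apply ellF_integrand_near_1.
Qed.

Lemma RInt_sin_sqr_PI2 : RInt (fun t => sin t ^ 2) 0 (PI / 2) = PI / 4 :> R.
Proof. rewrite RInt_sin_sqr, cos_PI2. field. Qed.

Lemma ellFm_PI2_expansion :
  Rabs (ellFm m (PI / 2) - PI / 2 - m * PI / 8) <= m ^ 2 * (PI / 2).
Proof.
  assert (Hsin2 : forall t, continuous (fun t => m * sin t ^ 2 / 2) t)
    by (intros; apply continuous_of_ex_derive; auto_derive; auto).
  assert (Hint : RInt (fun t => ellF_integrand m t - 1 - m * sin t ^ 2 / 2) 0 (PI / 2)
                 = ellFm m (PI / 2) - PI / 2 - m * PI / 8 :> R).
  { assert (Hw1 : forall t, continuous (fun t => ellF_integrand m t - 1) t)
        by (intros; apply (continuous_minus (V := R_NormedModule));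
            [apply ellF_integrand_continuous | apply continuous_const]).
      rewrite RInt_minus_R, RInt_minus_R, RInt_const_R;
        auto using ex_RInt_of_continuous, ex_RInt_ellF_integrand, ex_RInt_const.
      replace (RInt (fun t => m * sin t ^ 2 / 2) 0 (PI / 2))
        with (m / 2 * RInt (fun t => sin t ^ 2) 0 (PI / 2)).
      - rewrite RInt_sin_sqr_PI2. unfold ellFm. simpl. field.
      - rewrite <- RInt_scal_R.
        + apply RInt_ext_R. intros. field.
        + apply ex_RInt_of_continuous. intros; apply continuous_of_ex_derive; auto_derive; auto. }
  rewrite <- Hint. pose proof PI_bounds.
  eapply Rle_trans; [apply abs_RInt_le_bound |].
  - intros; apply (continuous_minus (V := R_NormedModule)); auto.
    apply (continuous_minus (V := R_NormedModule));
      [apply ellF_integrand_continuous | apply continuous_const].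
  - intros; apply ellF_integrand_taylor.
  - rewrite Rminus_0_r, Rabs_right; lra.
Qed.

End EllipticIntegral.

Lemma ellF_integrand_lipschitz_m m m' t : 0 <= m <= 1/2 -> 0 <= m' <= 1/2 ->
  Rabs (ellF_integrand m t - ellF_integrand m' t) <= 2 * Rabs (m - m').
Proof.
  intros Hm Hm'. pose proof (sin_sqr_bound t). unfold ellF_integrand.
  set (a := 1 - m * sin t ^ 2). set (b := 1 - m' * sin t ^ 2).
  assert (Ha : 1/2 <= a) by (unfold a; nra).
  assert (Hb : 1/2 <= b) by (unfold b; nra).
  assert (Hab : Rabs (b - a) <= Rabs (m - m')).
  { unfold a, b. replace (1 - m' * sin t ^ 2 - (1 - m * sin t ^ 2)) with ((m - m') * sin t ^ 2) by ring.
    rewrite Rabs_mult, (Rabs_right (sin t ^ 2)) by lra. pose proof (Rabs_pos (m - m')). nra. }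
  pose proof (sqrt_sqrt a ltac:(lra)). pose proof (sqrt_sqrt b ltac:(lra)).
  pose proof (sqrt_pos a). pose proof (sqrt_pos b).
  set (p := sqrt a) in *. set (q := sqrt b) in *.
  assert (p >= 7/10) by nra. assert (q >= 7/10) by nra.
  replace (/ p - / q) with ((q * q - p * p) / (p * q * (p + q))) by (field; lra).
  replace (q * q - p * p) with (b - a) by lra.
  unfold Rdiv. rewrite Rabs_mult, Rabs_inv, (Rabs_right (p * q * (p + q))) by nra.
  apply (Rmult_le_reg_r (p * q * (p + q))); [nra |].
  rewrite Rmult_assoc, Rinv_l by (apply Rgt_not_eq; nra).
  assert (p * q * (p + q) >= 1/2) by nra. pose proof (Rabs_pos (m - m')). nra.
Qed.

Lemma ellFm_lipschitz_m m m' x : 0 <= m <= 1/2 -> 0 <= m' <= 1/2 ->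
  Rabs (ellFm m x - ellFm m' x) <= 2 * Rabs (m - m') * Rabs x.
Proof.
  intros Hm Hm'. unfold ellFm. rewrite <- RInt_minus_R by auto using ex_RInt_ellF_integrand.
  replace (Rabs x) with (Rabs (x - 0)) by (f_equal; ring).
  apply abs_RInt_le_bound.
  - intros; apply (continuous_minus (V := R_NormedModule)); apply ellF_integrand_continuous; auto.
  - intros; apply ellF_integrand_lipschitz_m; auto.
Qed.

(** * The Jacobi amplitude *)

Section JacobiAmplitude.
Variable k : R.
Hypothesis Hk : 0 <= k ^ 2 <= 1/2.

Lemma ellFm_jam x : ellFm (k ^ 2) (jam x k) = x.
Proof.
  apply (epsilon_spec (inhabits 0) (fun phi => ellF k phi = x)).
  destruct (ellFm_surjective (k ^ 2) Hk x) as [p Hp]. exists p. exact Hp.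
Qed.

Lemma jam_lipschitz x y : Rabs (jam x k - jam y k) <= Rabs (x - y).
Proof. rewrite <- (ellFm_jam x), <- (ellFm_jam y) at 2. apply ellFm_expansive, Hk. Qed.

Lemma Rabs_jam_le x : Rabs (jam x k) <= Rabs x.
Proof.
  pose proof (ellFm_expansive (k ^ 2) Hk (jam x k) 0) as Hexp.
  rewrite ellFm_jam, ellFm_0, !Rminus_0_r in Hexp. exact Hexp.
Qed.

Lemma jam_near_id x : Rabs (jam x k - x) <= k ^ 2 * Rabs x.
Proof.
  pose proof (ellFm_near_id (k ^ 2) Hk (jam x k)) as Hnear. rewrite ellFm_jam in Hnear.
  pose proof Rabs_jam_le x. rewrite Rabs_minus_sym. nra.
Qed.

(* Inverse function rule by hand: [F] is expansive (so [am] is 1-Lipschitz) and differentiable. *)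
Lemma jam_derive x : is_derive (fun x => jam x k) x (/ ellF_integrand (k ^ 2) (jam x k)).
Proof.
  apply is_derive_Reals. set (s := k ^ 2) in *.
  set (p := jam x k). set (g := ellF_integrand s p).
  assert (Hg : 1 <= g) by apply (ellF_integrand_range s Hk).
  assert (HF : derivable_pt_lim (ellFm s) p g) by apply is_derive_Reals, ellFm_derive, Hk.
  intros eps Heps. destruct (HF eps Heps) as [del Hdel].
  exists del. intros h Hh0 Hh.
  set (d := jam (x + h) k - p).
  assert (Hd : Rabs d <= Rabs h).
  { unfold d, p. replace h with (x + h - x) at 2 by ring. apply jam_lipschitz. }
  assert (HFd : ellFm s (p + d) - ellFm s p = h).
  { unfold d, p. replace (jam x k + (jam (x + h) k - jam x k)) with (jam (x + h) k) by ring.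
    unfold s; rewrite !ellFm_jam. ring. }
  assert (Hd0 : d <> 0) by (intro E; rewrite E, Rplus_0_r in HFd; lra).
  specialize (Hdel d Hd0 ltac:(lra)). rewrite HFd in Hdel.
  replace ((jam (x + h) k - jam x k) / h - / g) with ((d / h) * / g * (g - h / d))
    by (fold p d; field; repeat split; auto; lra).
  rewrite !Rabs_mult, (Rabs_minus_sym g).
  assert (Rabs (d / h) <= 1).
  { unfold Rdiv. rewrite Rabs_mult, Rabs_inv. apply (Rmult_le_reg_r (Rabs h)).
    - apply Rabs_pos_lt; auto.
    - rewrite Rmult_assoc, Rinv_l, Rmult_1_r by (apply Rabs_no_R0; auto). lra. }
  assert (Rabs (/ g) <= 1).
  { rewrite Rabs_inv, Rabs_right by lra. rewrite <- Rinv_1. apply Rinv_le_contravar; lra. }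
  pose proof (Rabs_pos (d / h)). pose proof (Rabs_pos (/ g)). pose proof (Rabs_pos (h / d - g)).
  assert (Rabs (d / h) * Rabs (/ g) <= 1) by nra.
  nra.
Qed.

Lemma Derive_jam x : Derive (fun x => jam x k) x = sqrt (1 - k ^ 2 * sin (jam x k) ^ 2).
Proof. erewrite is_derive_unique by apply jam_derive. apply Rinv_inv. Qed.

End JacobiAmplitude.

Lemma jam_lipschitz_modulus k k' x y : 0 <= k ^ 2 <= 1/2 -> 0 <= k' ^ 2 <= 1/2 ->
  Rabs (jam x k - jam y k') <= Rabs (x - y) + 2 * Rabs (k ^ 2 - k' ^ 2) * Rabs y.
Proof.
  intros Hk Hk'.
  pose proof (ellFm_expansive (k ^ 2) Hk (jam x k) (jam y k')) as Hexp.
  pose proof (ellFm_lipschitz_m (k ^ 2) (k' ^ 2) (jam y k') Hk Hk') as Hlip.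
  rewrite ellFm_jam in Hexp, Hlip by auto.
  pose proof (Rabs_jam_le k' Hk' y). pose proof (Rabs_pos (k ^ 2 - k' ^ 2)).
  pose proof (Rabs_triang (x - y) (y - ellFm (k ^ 2) (jam y k'))) as Htri.
  replace (x - y + (y - ellFm (k ^ 2) (jam y k'))) with (x - ellFm (k ^ 2) (jam y k')) in Htri
    by ring.
  rewrite (Rabs_minus_sym y) in Htri. nra.
Qed.

(** * The phase of U *)

(* With k^2 = m: [scale m = 2 K(k) / pi], and [U] is [sqrt (1 - E)] times [sin (phase m)]. *)
Definition scale (m : R) : R := 2 * ellFm m (PI / 2) / PI.

Definition phase (m z : R) : R := jam (scale m * z) (sqrt m).

Definition phase_rate (m z : R) : R := sqrt (1 - m * sin (phase m z) ^ 2).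

Definition sin_coef (m : R) : R := / PI * RInt (fun z => sin (phase m z) * sin z) 0 (2 * PI).

Lemma Rabs_mul_2_div_PI_le y M : Rabs y <= M * (PI / 2) -> Rabs (y * (2 / PI)) <= M.
Proof.
  intros Hy. pose proof PI_bounds.
  rewrite Rabs_mult, (Rabs_right (2 / PI)) by (apply Rle_ge, Rlt_le, Rdiv_lt_0_compat; lra).
  apply (Rmult_le_reg_r (PI / 2)); [lra |].
  replace (Rabs y * (2 / PI) * (PI / 2)) with (Rabs y) by (field; lra).
  exact Hy.
Qed.

Section Phase.
Variable m : R.
Hypothesis Hm : 0 <= m <= / 1600.

Let Hm2 : 0 <= m <= 1/2.
Proof. lra. Qed.

Let Hk : 0 <= sqrt m ^ 2 <= 1/2.
Proof. rewrite pow2_sqrt; lra. Qed.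

Lemma scale_bounds : Rabs (scale m - 1) <= m /\ 1 <= scale m <= 3/2.
Proof.
  pose proof PI_bounds.
  pose proof (ellFm_near_id m Hm2 (PI / 2)) as Hnear.
  pose proof (ellFm_increment m Hm2 0 (PI / 2) ltac:(lra)) as Hinc.
  rewrite ellFm_0 in Hinc. rewrite (Rabs_right (PI / 2)) in Hnear by lra.
  assert (E : scale m - 1 = (ellFm m (PI / 2) - PI / 2) * (2 / PI)) by (unfold scale; field; lra).
  assert (Hs : Rabs (scale m - 1) <= m) by (rewrite E; apply Rabs_mul_2_div_PI_le; lra).
  apply Rabs_le_between in Hs. unfold scale in *.
  split; [apply Rabs_le; lra |].
  split; [apply (Rmult_le_reg_r PI); [lra | field_simplify; lra] | lra].
Qed.

Lemma scale_expansion : Rabs (scale m - 1 - m / 4) <= m ^ 2.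
Proof.
  pose proof PI_bounds. pose proof (ellFm_PI2_expansion m Hm2) as HK.
  replace (scale m - 1 - m / 4) with ((ellFm m (PI / 2) - PI / 2 - m * PI / 8) * (2 / PI))
    by (unfold scale; field; lra).
  apply Rabs_mul_2_div_PI_le, HK.
Qed.

Lemma phase_near_id z : 0 <= z <= 2 * PI -> Rabs (phase m z - z) <= 20 * m.
Proof.
  intros Hz. pose proof PI_bounds. destruct scale_bounds as [Hc1 Hc2].
  pose proof (jam_near_id (sqrt m) Hk (scale m * z)) as HJ.
  rewrite pow2_sqrt, (Rabs_right (scale m * z)) in HJ by nra.
  unfold phase.
  replace (jam (scale m * z) (sqrt m) - z)
    with ((jam (scale m * z) (sqrt m) - scale m * z) + (scale m - 1) * z) by ring.
  eapply Rle_trans; [apply Rabs_triang |]. rewrite Rabs_mult, (Rabs_right z) by lra.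
  assert (scale m * z <= 3/2 * (2 * PI)) by nra.
  assert (Rabs (scale m - 1) * z <= m * (2 * PI)) by (pose proof (Rabs_pos (scale m - 1)); nra).
  nra.
Qed.

Lemma phase_rate_pos z : 0 < 1 - m * sin (phase m z) ^ 2.
Proof. pose proof (sin_sqr_bound (phase m z)). nra. Qed.

Lemma phase_rate_bounds z : Rabs (phase_rate m z - 1) <= m /\ 0 <= phase_rate m z <= 1.
Proof.
  pose proof (phase_rate_pos z). pose proof (sin_sqr_bound (phase m z)).
  assert (Hq : 0 < phase_rate m z) by (apply sqrt_lt_R0; auto).
  assert (Hq2 : phase_rate m z * phase_rate m z = 1 - m * sin (phase m z) ^ 2)
    by (apply sqrt_sqrt; lra).
  assert (phase_rate m z <= 1) by nra.
  split; [rewrite Rabs_left1 by lra; nra | lra].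
Qed.

Lemma phase_derive z : is_derive (phase m) z (scale m * phase_rate m z).
Proof.
  unfold phase, phase_rate. auto_derive.
  - eexists; apply jam_derive, Hk.
  - rewrite Derive_jam by exact Hk. rewrite pow2_sqrt by lra. unfold phase. ring.
Qed.

Lemma ex_derive_phase z : ex_derive (phase m) z.
Proof. eexists; apply phase_derive. Qed.

Lemma phase_rate_derive z :
  is_derive (phase_rate m) z (- scale m * m * sin (phase m z) * cos (phase m z)).
Proof.
  pose proof (phase_rate_pos z).
  assert (Hq : 0 < phase_rate m z) by (apply sqrt_lt_R0; auto).
  unfold phase_rate. auto_derive.
  - split; [apply ex_derive_phase | auto].
  - replace (Derive (fun x : R => phase m x) z) with (scale m * phase_rate m z)
      by (symmetry; apply is_derive_unique, phase_derive).
    replace (sqrt (1 + - (m * (sin (phase m z) * (sin (phase m z) * 1))))) with (phase_rate m z)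
      by (unfold phase_rate; f_equal; ring).
    field. lra.
Qed.

Lemma ex_derive_phase_rate z : ex_derive (phase_rate m) z.
Proof. eexists; apply phase_rate_derive. Qed.

Lemma continuous_sin_phase_mul_sin z : continuous (fun z => sin (phase m z) * sin z) z.
Proof. apply continuous_of_ex_derive. auto_derive. apply ex_derive_phase. Qed.

Lemma sin_coef_near_1 : Rabs (sin_coef m - 1) <= 40 * m.
Proof.
  pose proof PI_bounds.
  assert (Hc : forall t, continuous (fun z => (sin (phase m z) - sin z) * sin z) t)
    by (intros; apply continuous_of_ex_derive; auto_derive; apply ex_derive_phase).
  assert (Hdiff : sin_coef m - 1 = / PI * RInt (fun z => (sin (phase m z) - sin z) * sin z) 0 (2 * PI)).
  { rewrite (RInt_ext_R _ (fun z => sin (phase m z) * sin z - sin z ^ 2)) by (intros; ring).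
    rewrite RInt_minus_R, RInt_sin_sqr, sin_2PI.
    - unfold sin_coef. field. lra.
    - apply ex_RInt_of_continuous, continuous_sin_phase_mul_sin.
    - apply ex_RInt_of_continuous. intros; apply continuous_of_ex_derive; auto_derive; auto. }
  rewrite Hdiff, Rabs_mult, Rabs_inv, (Rabs_right PI) by lra.
  assert (HR : Rabs (RInt (fun z => (sin (phase m z) - sin z) * sin z) 0 (2 * PI))
               <= 20 * m * Rabs (2 * PI - 0)).
  { apply abs_RInt_le_bound; auto. intros t Ht.
    rewrite Rmin_left, Rmax_right in Ht by lra.
    rewrite Rabs_mult. pose proof (Rabs_sin_le_1 t). pose proof (sin_lipschitz (phase m t) t).
    pose proof (phase_near_id t Ht). pose proof (Rabs_pos (sin (phase m t) - sin t)).
    pose proof (Rabs_pos (sin t)). nra. }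
  rewrite Rminus_0_r, (Rabs_right (2 * PI)) in HR by lra.
  apply (Rmult_le_reg_l PI); [lra |]. rewrite <- Rmult_assoc, Rinv_r, Rmult_1_l by lra. nra.
Qed.

End Phase.

Section PhaseDependence.
Variables m1 m2 : R.
Hypotheses (Hm1 : 0 <= m1 <= / 1600) (Hm2 : 0 <= m2 <= / 1600).

Lemma scale_lipschitz : Rabs (scale m1 - scale m2) <= 2 * Rabs (m1 - m2).
Proof.
  pose proof PI_bounds.
  pose proof (ellFm_lipschitz_m m1 m2 (PI / 2) ltac:(lra) ltac:(lra)) as HF.
  rewrite (Rabs_right (PI / 2)) in HF by lra.
  replace (scale m1 - scale m2) with ((ellFm m1 (PI / 2) - ellFm m2 (PI / 2)) * (2 / PI))
    by (unfold scale; field; lra).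
  apply Rabs_mul_2_div_PI_le, HF.
Qed.

Lemma phase_lipschitz_m z : 0 <= z <= 2 * PI ->
  Rabs (phase m1 z - phase m2 z) <= 40 * Rabs (m1 - m2).
Proof.
  intros Hz. pose proof PI_bounds.
  assert (Hk1 : 0 <= sqrt m1 ^ 2 <= 1/2) by (rewrite pow2_sqrt; lra).
  assert (Hk2 : 0 <= sqrt m2 ^ 2 <= 1/2) by (rewrite pow2_sqrt; lra).
  pose proof (jam_lipschitz_modulus _ _ (scale m1 * z) (scale m2 * z) Hk1 Hk2) as HJ.
  rewrite !pow2_sqrt in HJ by lra. unfold phase.
  pose proof scale_lipschitz. destruct (scale_bounds m2 Hm2) as [_ Hc2].
  replace (scale m1 * z - scale m2 * z) with ((scale m1 - scale m2) * z) in HJ by ring.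
  rewrite Rabs_mult, (Rabs_right z), (Rabs_right (scale m2 * z)) in HJ by nra.
  pose proof (Rabs_pos (m1 - m2)). pose proof (Rabs_pos (scale m1 - scale m2)).
  assert (Rabs (scale m1 - scale m2) * z <= 2 * Rabs (m1 - m2) * (2 * PI)) by nra.
  assert (scale m2 * z <= 3/2 * (2 * PI)) by nra.
  assert (2 * Rabs (m1 - m2) * (scale m2 * z) <= 2 * Rabs (m1 - m2) * (3/2 * (2 * PI))) by nra.
  nra.
Qed.

Lemma sin_coef_lipschitz : Rabs (sin_coef m1 - sin_coef m2) <= 80 * Rabs (m1 - m2).
Proof.
  pose proof PI_bounds. unfold sin_coef.
  rewrite <- Rmult_minus_distr_l, <- RInt_minus_R
    by (apply ex_RInt_of_continuous, continuous_sin_phase_mul_sin; auto).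
  rewrite Rabs_mult, Rabs_inv, (Rabs_right PI) by lra.
  assert (HR : Rabs (RInt (fun x => sin (phase m1 x) * sin x - sin (phase m2 x) * sin x) 0 (2 * PI))
               <= 40 * Rabs (m1 - m2) * Rabs (2 * PI - 0)).
  { apply abs_RInt_le_bound.
    - intros; apply continuous_of_ex_derive; auto_derive.
      repeat split; apply ex_derive_phase; auto.
    - intros u Hu. rewrite Rmin_left, Rmax_right in Hu by lra.
      replace (sin (phase m1 u) * sin u - sin (phase m2 u) * sin u)
        with ((sin (phase m1 u) - sin (phase m2 u)) * sin u) by ring.
      rewrite Rabs_mult. pose proof (Rabs_sin_le_1 u).
      pose proof (sin_lipschitz (phase m1 u) (phase m2 u)). pose proof (phase_lipschitz_m u Hu).
      pose proof (Rabs_pos (sin (phase m1 u) - sin (phase m2 u))). pose proof (Rabs_pos (sin u)).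
      nra. }
  rewrite Rminus_0_r, (Rabs_right (2 * PI)) in HR by lra.
  apply (Rmult_le_reg_l PI); [lra |]. rewrite <- Rmult_assoc, Rinv_r, Rmult_1_l by lra. nra.
Qed.

End PhaseDependence.

(** * The Fourier coefficient a *)

(* Writing E = 1 - e^2, the modulus of the paper satisfies k^2 = e^2 / (2 - e^2). *)
Definition kmod_sq (e : R) : R := e ^ 2 / (2 - e ^ 2).

Definition amp (e : R) : R := e * sin_coef (kmod_sq e).

Section SmallAmplitude.
Variable e : R.
Hypothesis He : 0 < e <= / 40.

Let He2 : 0 < e ^ 2 <= / 1600.
Proof. split; nra. Qed.

Lemma kmod_sq_bounds : 0 <= kmod_sq e - e ^ 2 / 2 <= e ^ 4 /\ kmod_sq e <= e ^ 2.
Proof.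
  unfold kmod_sq. replace (e ^ 4) with ((e ^ 2) ^ 2) by ring.
  set (x := e ^ 2) in *.
  replace (x / (2 - x) - x / 2) with (x ^ 2 / (2 * (2 - x))) by (field; lra).
  repeat split.
  - apply Rlt_le, Rdiv_lt_0_compat; nra.
  - apply (Rmult_le_reg_r (2 * (2 - x))); [lra |]. field_simplify; nra.
  - apply (Rmult_le_reg_r (2 - x)); [lra |]. field_simplify; nra.
Qed.

Lemma kmod_sq_small : 0 <= kmod_sq e <= / 1600.
Proof. pose proof kmod_sq_bounds. nra. Qed.

Lemma kmod_one_sub : kmod (1 - e ^ 2) = sqrt (kmod_sq e).
Proof.
  unfold kmod, kmod_sq. do 2 f_equal; ring.
Qed.

Let sqrt_two_factors : sqrt (2 / (2 - e ^ 2)) * sqrt ((2 - e ^ 2) / 2) = 1.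
Proof.
  rewrite <- sqrt_mult by (apply Rlt_le, Rdiv_lt_0_compat; lra).
  replace (2 / (2 - e ^ 2) * ((2 - e ^ 2) / 2)) with 1 by (field; lra).
  apply sqrt_1.
Qed.

Lemma T0_one_sub : T0 (1 - e ^ 2) = PI * sqrt (2 / (2 - e ^ 2)) * scale (kmod_sq e).
Proof.
  pose proof PI_bounds.
  unfold T0, ellK. rewrite kmod_one_sub, ellF_ellFm, pow2_sqrt by apply kmod_sq_small.
  unfold scale. replace (1 + (1 - e ^ 2)) with (2 - e ^ 2) by ring. field. lra.
Qed.

Lemma U_one_sub z : U (1 - e ^ 2) z = e * sin (phase (kmod_sq e) z).
Proof.
  pose proof PI_bounds. destruct (scale_bounds _ kmod_sq_small) as [_ Hc].
  assert (0 < sqrt (2 / (2 - e ^ 2))) by (apply sqrt_lt_R0, Rdiv_lt_0_compat; lra).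
  unfold U, u0, jsn, phase.
  replace (1 - (1 - e ^ 2)) with (e ^ 2) by ring. rewrite sqrt_pow2, kmod_one_sub by lra.
  do 3 f_equal. unfold ell. rewrite T0_one_sub.
  replace (1 + (1 - e ^ 2)) with (2 - e ^ 2) by ring.
  replace (z / (PI / (PI * sqrt (2 / (2 - e ^ 2)) * scale (kmod_sq e))) * sqrt ((2 - e ^ 2) / 2))
    with (scale (kmod_sq e) * z * (sqrt (2 / (2 - e ^ 2)) * sqrt ((2 - e ^ 2) / 2)))
    by (field; lra).
  rewrite sqrt_two_factors. ring.
Qed.

Lemma acoef_one_sub : acoef (1 - e ^ 2) = amp e.
Proof.
  unfold acoef, amp, sin_coef.
  rewrite (RInt_ext_R _ (fun z => e * (sin (phase (kmod_sq e) z) * sin z)))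
    by (intros; rewrite U_one_sub; ring).
  rewrite RInt_scal_R; [ring |].
  apply ex_RInt_of_continuous, continuous_sin_phase_mul_sin, kmod_sq_small.
Qed.

Lemma ell_sqr_one_sub : ell (1 - e ^ 2) ^ 2 = (1 - e ^ 2 / 2) / scale (kmod_sq e) ^ 2.
Proof.
  pose proof PI_bounds. destruct (scale_bounds _ kmod_sq_small) as [_ Hc].
  assert (0 < sqrt (2 / (2 - e ^ 2))) by (apply sqrt_lt_R0, Rdiv_lt_0_compat; lra).
  assert (Hq : sqrt (2 / (2 - e ^ 2)) ^ 2 = 2 / (2 - e ^ 2))
    by (apply pow2_sqrt, Rlt_le, Rdiv_lt_0_compat; lra).
  unfold ell. rewrite T0_one_sub.
  replace ((PI / (PI * sqrt (2 / (2 - e ^ 2)) * scale (kmod_sq e))) ^ 2)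
    with (/ (sqrt (2 / (2 - e ^ 2)) ^ 2 * scale (kmod_sq e) ^ 2)) by (field; lra).
  rewrite Hq. field. lra.
Qed.

End SmallAmplitude.

Lemma amp_near e : 0 < e <= / 40 -> Rabs (amp e - e) <= 40 * e ^ 3 /\ e / 2 <= amp e <= 2 * e.
Proof.
  intros He. pose proof (sin_coef_near_1 _ (kmod_sq_small e He)) as Hc.
  destruct (kmod_sq_bounds e He) as [_ Hk].
  assert (Hc' : Rabs (sin_coef (kmod_sq e) - 1) <= 40 * e ^ 2) by lra.
  assert (e ^ 2 <= / 1600) by nra.
  unfold amp. replace (e * sin_coef (kmod_sq e) - e) with (e * (sin_coef (kmod_sq e) - 1)) by ring.
  rewrite Rabs_mult, (Rabs_right e) by lra.
  apply Rabs_le_between in Hc'.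
  split; [| split]; nra.
Qed.

Lemma amp_sqr_near e : 0 < e <= / 40 -> Rabs (amp e ^ 2 - e ^ 2) <= 120 * e ^ 4.
Proof.
  intros He. destruct (amp_near e He) as [H1 H2].
  replace (amp e ^ 2 - e ^ 2) with ((amp e - e) * (amp e + e)) by ring.
  rewrite Rabs_mult, (Rabs_right (amp e + e)) by lra.
  pose proof (Rabs_pos (amp e - e)). nra.
Qed.

Lemma pow_le_amp e n : 0 < e <= / 40 -> e ^ n <= 2 ^ n * amp e ^ n.
Proof.
  intros He. destruct (amp_near e He) as [_ H]. rewrite <- Rpow_mult_distr.
  apply pow_incr. lra.
Qed.

Lemma kmod_sq_lipschitz e1 e2 : 0 < e1 <= / 40 -> 0 < e2 <= / 40 ->
  Rabs (kmod_sq e1 - kmod_sq e2) <= 2 * Rabs (e1 ^ 2 - e2 ^ 2).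
Proof.
  intros H1 H2. unfold kmod_sq.
  assert (0 < e1 ^ 2 <= / 1600) by (split; nra). assert (0 < e2 ^ 2 <= / 1600) by (split; nra).
  replace (e1 ^ 2 / (2 - e1 ^ 2) - e2 ^ 2 / (2 - e2 ^ 2))
    with ((e1 ^ 2 - e2 ^ 2) * (2 / ((2 - e1 ^ 2) * (2 - e2 ^ 2)))) by (field; lra).
  rewrite Rabs_mult, (Rabs_right (2 / _)) by (apply Rle_ge, Rlt_le, Rdiv_lt_0_compat; nra).
  assert (2 / ((2 - e1 ^ 2) * (2 - e2 ^ 2)) <= 2).
  { apply (Rmult_le_reg_r ((2 - e1 ^ 2) * (2 - e2 ^ 2))); [nra |]. field_simplify; nra. }
  pose proof (Rabs_pos (e1 ^ 2 - e2 ^ 2)). nra.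
Qed.

Lemma sin_coef_kmod_sq_lipschitz e1 e2 : 0 < e1 <= / 40 -> 0 < e2 <= / 40 ->
  Rabs (sin_coef (kmod_sq e2) - sin_coef (kmod_sq e1)) <= 8 * Rabs (e2 - e1).
Proof.
  intros H1 H2.
  pose proof (sin_coef_lipschitz _ _ (kmod_sq_small e2 H2) (kmod_sq_small e1 H1)).
  pose proof (kmod_sq_lipschitz e2 e1 H2 H1) as Hk.
  replace (e2 ^ 2 - e1 ^ 2) with ((e2 - e1) * (e2 + e1)) in Hk by ring.
  rewrite Rabs_mult, (Rabs_right (e2 + e1)) in Hk by lra.
  pose proof (Rabs_pos (e2 - e1)). nra.
Qed.

Lemma amp_sub e1 e2 : amp e2 - amp e1
  = (e2 - e1) * sin_coef (kmod_sq e2) + e1 * (sin_coef (kmod_sq e2) - sin_coef (kmod_sq e1)).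
Proof. unfold amp; ring. Qed.

Lemma sin_coef_kmod_sq_range e : 0 < e <= / 40 -> 39/40 <= sin_coef (kmod_sq e) <= 41/40.
Proof.
  intros He. pose proof (sin_coef_near_1 _ (kmod_sq_small e He)) as Hc.
  pose proof (kmod_sq_small e He). apply Rabs_le_between in Hc. lra.
Qed.

Lemma amp_increasing e1 e2 : 0 < e1 <= / 40 -> 0 < e2 <= / 40 -> e1 < e2 -> amp e1 < amp e2.
Proof.
  intros H1 H2 Hlt.
  pose proof (sin_coef_kmod_sq_lipschitz e1 e2 H1 H2) as Hl. pose proof (sin_coef_kmod_sq_range e2 H2).
  rewrite (Rabs_right (e2 - e1)) in Hl by lra. apply Rabs_le_between in Hl.
  pose proof (amp_sub e1 e2). nra.
Qed.

Lemma amp_injective e1 e2 : 0 < e1 <= / 40 -> 0 < e2 <= / 40 -> amp e1 = amp e2 -> e1 = e2.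
Proof.
  intros H1 H2 Heq. destruct (Rtotal_order e1 e2) as [Hl | [Hq | Hl]]; auto.
  - pose proof (amp_increasing e1 e2 H1 H2 Hl). lra.
  - pose proof (amp_increasing e2 e1 H2 H1 Hl). lra.
Qed.

Lemma amp_lipschitz e1 e2 : 0 < e1 <= / 40 -> 0 < e2 <= / 40 ->
  Rabs (amp e1 - amp e2) <= 2 * Rabs (e1 - e2).
Proof.
  intros H1 H2. pose proof (sin_coef_kmod_sq_lipschitz e1 e2 H1 H2) as Hl.
  pose proof (sin_coef_kmod_sq_range e2 H2).
  rewrite Rabs_minus_sym, (Rabs_minus_sym e1), amp_sub.
  eapply Rle_trans; [apply Rabs_triang |].
  rewrite !Rabs_mult, (Rabs_right (sin_coef _)), (Rabs_right e1) by lra.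
  pose proof (Rabs_pos (e2 - e1)). pose proof (Rabs_pos (sin_coef (kmod_sq e2) - sin_coef (kmod_sq e1))).
  nra.
Qed.

(* Clamping onto [a, b] reduces this to [IVT_gen]. *)
Lemma IVT_lipschitz_on (g : R -> R) a b L y : a <= b -> 0 <= L ->
  (forall x x', a <= x <= b -> a <= x' <= b -> Rabs (g x - g x') <= L * Rabs (x - x')) ->
  g a <= y <= g b -> exists x, a <= x <= b /\ g x = y.
Proof.
  intros Hab HL Hg Hy.
  set (clamp := fun x => Rmax a (Rmin x b)).
  assert (Hc : forall x, a <= clamp x <= b)
    by (intros; unfold clamp, Rmax, Rmin; repeat destruct Rle_dec; lra).
  assert (Hcl : forall x x', Rabs (clamp x - clamp x') <= Rabs (x - x')).
  { intros; unfold clamp, Rmax, Rmin.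
    repeat destruct Rle_dec; unfold Rabs; repeat destruct Rcase_abs; lra. }
  assert (Hid : forall x, a <= x <= b -> clamp x = x)
    by (intros; unfold clamp, Rmax, Rmin; repeat destruct Rle_dec; lra).
  assert (Hcont : continuity (fun x => g (clamp x))).
  { intros x0 eps Heps. exists (eps / (L + 1)). split; [apply Rdiv_lt_0_compat; lra |].
    intros x [_ Hx]. simpl in *. unfold Rdist in *.
    pose proof (Hg _ _ (Hc x) (Hc x0)). pose proof (Hcl x x0).
    apply Rle_lt_trans with (L * Rabs (x - x0)); [nra |].
    apply Rle_lt_trans with (L * (eps / (L + 1))); [nra |].
    apply (Rmult_lt_reg_r (L + 1)); [lra |]. field_simplify; nra. }
  destruct (IVT_gen _ a b y Hcont) as [x [Hx Hgx]].
  - rewrite !Hid by lra. rewrite Rmin_left, Rmax_right by lra. exact Hy.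
  - rewrite Rmin_left, Rmax_right in Hx by lra. rewrite Hid in Hgx by exact Hx.
    exists x. split; assumption.
Qed.

Lemma amp_surjective b : 0 < b < amp (/ 40) -> exists e, 0 < e < / 40 /\ amp e = b.
Proof.
  intros Hb. destruct (amp_near (/ 40) ltac:(lra)) as [_ Ha0].
  destruct (amp_near (b / 4) ltac:(lra)) as [_ Hlo].
  destruct (IVT_lipschitz_on amp (b / 4) (/ 40) 2 b) as [x [Hx Hax]]; try lra.
  - intros x x' Hx Hx'. apply amp_lipschitz; lra.
  - exists x. split; [| exact Hax].
    split; [lra |]. destruct (Req_dec x (/ 40)) as [-> | ]; lra.
Qed.

Lemma energy_expansion e : 0 < e <= / 40 ->
  Rabs ((1 - e ^ 2) - (1 - amp e ^ 2)) <= 1920 * amp e ^ 4.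
Proof.
  intros He. replace ((1 - e ^ 2) - (1 - amp e ^ 2)) with (amp e ^ 2 - e ^ 2) by ring.
  pose proof (amp_sqr_near e He). pose proof (pow_le_amp e 4 He). lra.
Qed.

(* [(1 - x/2) / c^2] with [c = 1 + x/8 + O(x^2)], i.e. ell^2 in terms of x = e^2 and r = c - 1. *)
Lemma ell_sqr_algebra x s r : 0 < x <= / 1600 -> 0 <= s - x / 2 <= x ^ 2 ->
  Rabs (r - s / 4) <= s ^ 2 -> 0 <= r <= x ->
  Rabs ((1 - x / 2) / (1 + r) ^ 2 - (1 - 3 / 4 * x)) <= 8 * x ^ 2.
Proof.
  intros Hx Hs Hr Hr0. apply Rabs_le_between in Hr.
  set (num := (1 - x / 2) - (1 - 3 / 4 * x) * (1 + r) ^ 2).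
  assert (Hnum : Rabs num <= 8 * x ^ 2).
  { apply Rabs_le.
    replace num with ((x / 4 - 2 * r) - r ^ 2 + (3 * x / 4) * (2 * r + r ^ 2)) by (unfold num; field).
    assert (0 <= s <= x) by nra.
    assert (s ^ 2 <= x ^ 2) by nra.
    assert (- (4 * x ^ 2) <= x / 4 - 2 * r <= 4 * x ^ 2) by nra.
    assert (r ^ 2 <= x ^ 2) by nra.
    assert (0 <= 3 * x / 4 * (2 * r + r ^ 2) <= 9 / 4 * x ^ 2) by (split; nra).
    split; nra. }
  replace ((1 - x / 2) / (1 + r) ^ 2 - (1 - 3 / 4 * x)) with (num / (1 + r) ^ 2)
    by (unfold num; field; lra).
  unfold Rdiv. rewrite Rabs_mult, Rabs_inv, (Rabs_right ((1 + r) ^ 2)) by nra.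
  assert (1 <= (1 + r) ^ 2) by nra.
  assert (/ (1 + r) ^ 2 <= 1) by (rewrite <- Rinv_1; apply Rinv_le_contravar; lra).
  assert (0 < / (1 + r) ^ 2) by (apply Rinv_0_lt_compat; lra).
  pose proof (Rabs_pos num). nra.
Qed.

Lemma ell_sqr_expansion e : 0 < e <= / 40 ->
  Rabs (ell (1 - e ^ 2) ^ 2 - (1 - 3 / 4 * amp e ^ 2)) <= 1600 * amp e ^ 4.
Proof.
  intros He. pose proof (kmod_sq_small e He) as Hm.
  destruct (kmod_sq_bounds e He) as [Hk1 Hk2]. destruct (scale_bounds _ Hm) as [Hc1 Hc2].
  assert (Hell : Rabs (ell (1 - e ^ 2) ^ 2 - (1 - 3 / 4 * e ^ 2)) <= 8 * e ^ 4).
  { rewrite ell_sqr_one_sub by exact He.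
    replace (scale (kmod_sq e)) with (1 + (scale (kmod_sq e) - 1)) by ring.
    replace (e ^ 4) with ((e ^ 2) ^ 2) by ring.
    apply ell_sqr_algebra with (kmod_sq e); try (split; nra).
    - apply scale_expansion, Hm.
    - apply Rabs_le_between in Hc1. lra. }
  pose proof (amp_sqr_near e He). pose proof (pow_le_amp e 4 He).
  replace (ell (1 - e ^ 2) ^ 2 - (1 - 3 / 4 * amp e ^ 2))
    with ((ell (1 - e ^ 2) ^ 2 - (1 - 3 / 4 * e ^ 2)) + 3 / 4 * (amp e ^ 2 - e ^ 2)) by ring.
  eapply Rle_trans; [apply Rabs_triang |]. rewrite Rabs_mult, (Rabs_right (3 / 4)) by lra.
  lra.
Qed.

(** * The H^2 remainder *)

(* Pointwise bounds for [e sin p - a sin z] and its first two derivatives, where [p] is the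
   phase at [z], [c q] its derivative and [s] the parameter [m]. *)
Section ResidualBounds.
Variables e a p z c q s : R.
Hypotheses (He : 0 < e) (Hs : 0 <= s <= / 1600) (Hp : Rabs (p - z) <= 20 * s)
  (Ha : Rabs (a - e) <= 40 * e * s) (Hc : Rabs (c - 1) <= s) (Hc1 : 1 <= c <= 3/2)
  (Hq : Rabs (q - 1) <= s) (Hq1 : 0 <= q <= 1).

Let Hes : 0 <= e * s.
Proof. nra. Qed.

Let Hcq : Rabs (c * q - 1) <= 2 * s.
Proof.
  replace (c * q - 1) with ((c - 1) * q + (q - 1)) by ring.
  eapply Rle_trans; [apply Rabs_triang |]. rewrite Rabs_mult, (Rabs_right q) by lra.
  pose proof (Rabs_pos (c - 1)). nra.
Qed.

Let Hsin : e * Rabs (sin p - sin z) <= e * (20 * s).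
Proof. pose proof (sin_lipschitz p z). apply Rmult_le_compat_l; lra. Qed.

Let Hcos : e * Rabs (cos p - cos z) <= e * (20 * s).
Proof. pose proof (cos_lipschitz p z). apply Rmult_le_compat_l; lra. Qed.

Let Hasin : Rabs (a - e) * Rabs (sin z) <= 40 * e * s.
Proof. pose proof (Rabs_sin_le_1 z). pose proof (Rabs_pos (a - e)). nra. Qed.

Lemma residual_bound : Rabs (e * sin p - a * sin z) <= 70 * e * s.
Proof.
  replace (e * sin p - a * sin z) with (e * (sin p - sin z) - (a - e) * sin z) by ring.
  eapply Rle_trans; [apply Rabs_triang |]. rewrite Rabs_Ropp, !Rabs_mult, (Rabs_right e) by lra.
  lra.
Qed.

Lemma residual_d1_bound : Rabs (e * cos p * (c * q) - a * cos z) <= 70 * e * s.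
Proof.
  replace (e * cos p * (c * q) - a * cos z)
    with (e * cos p * (c * q - 1) + e * (cos p - cos z) - (a - e) * cos z) by ring.
  eapply Rle_trans; [apply Rabs_triang |]. rewrite Rabs_Ropp.
  eapply Rle_trans; [apply Rplus_le_compat_r, Rabs_triang |].
  rewrite !Rabs_mult, (Rabs_right e) by lra.
  pose proof (Rabs_cos_le_1 z). pose proof (Rabs_cos_le_1 p). pose proof (Rabs_pos (a - e)).
  pose proof (Rabs_pos (cos p)). pose proof (Rabs_pos (c * q - 1)).
  assert (e * Rabs (cos p) * Rabs (c * q - 1) <= e * (2 * s))
    by (rewrite Rmult_assoc; apply Rmult_le_compat_l; nra).
  assert (Rabs (a - e) * Rabs (cos z) <= 40 * e * s) by nra.
  lra.
Qed.

Lemma residual_d2_bound :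
  Rabs (- e * sin p * (c * q) ^ 2 + e * cos p * (c * (- c * s * sin p * cos p)) + a * sin z)
  <= 70 * e * s.
Proof.
  replace (- e * sin p * (c * q) ^ 2 + e * cos p * (c * (- c * s * sin p * cos p)) + a * sin z)
    with (- (e * (sin p * ((c * q - 1) * (c * q + 1)))) - e * (sin p - sin z) + (a - e) * sin z
          - e * (c ^ 2 * s * (sin p * cos p ^ 2))) by ring.
  pose proof (Rabs_sin_le_1 p). pose proof (Rabs_cos_le_1 p).
  assert (A1 : Rabs (sin p * ((c * q - 1) * (c * q + 1))) <= 6 * s).
  { rewrite !Rabs_mult, (Rabs_right (c * q + 1)) by nra.
    pose proof (Rabs_pos (sin p)). pose proof (Rabs_pos (c * q - 1)).
    assert (0 <= c * q + 1 <= 3) by nra.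
    assert (Rabs (c * q - 1) * (c * q + 1) <= 2 * s * 3) by nra. nra. }
  assert (A2 : Rabs (c ^ 2 * s * (sin p * cos p ^ 2)) <= 3 * s).
  { rewrite !Rabs_mult, (Rabs_right (c ^ 2)), (Rabs_right s), <- RPow_abs by nra.
    pose proof (Rabs_pos (sin p)). pose proof (Rabs_pos (cos p)).
    assert (Rabs (sin p) * Rabs (cos p) ^ 2 <= 1) by nra.
    assert (c ^ 2 <= 9 / 4) by nra.
    assert (0 <= Rabs (sin p) * Rabs (cos p) ^ 2) by nra.
    apply Rle_trans with (9 / 4 * s * 1); [apply Rmult_le_compat; nra | lra]. }
  eapply Rle_trans; [apply Rabs_triang |].
  eapply Rle_trans; [apply Rplus_le_compat_r, Rabs_triang |].
  eapply Rle_trans; [apply Rplus_le_compat_r, Rplus_le_compat_r, Rabs_triang |].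
  rewrite !Rabs_Ropp, !(Rabs_mult e), (Rabs_mult (a - e)), (Rabs_right e) by lra.
  assert (e * Rabs (sin p * ((c * q - 1) * (c * q + 1))) <= e * (6 * s))
    by (apply Rmult_le_compat_l; lra).
  assert (e * Rabs (c ^ 2 * s * (sin p * cos p ^ 2)) <= e * (3 * s))
    by (apply Rmult_le_compat_l; lra).
  lra.
Qed.

End ResidualBounds.

Definition residual (e z : R) : R := e * sin (phase (kmod_sq e) z) - amp e * sin z.

Definition residual_d1 (e z : R) : R :=
  e * cos (phase (kmod_sq e) z) * (scale (kmod_sq e) * phase_rate (kmod_sq e) z) - amp e * cos z.

Definition residual_d2 (e z : R) : R :=
  let m := kmod_sq e in let c := scale m in let p := phase m z in
  - e * sin p * (c * phase_rate m z) ^ 2 + e * cos p * (c * (- c * m * sin p * cos p))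
  + amp e * sin z.

Section Residual.
Variable e : R.
Hypothesis He : 0 < e <= / 40.

Let Hm : 0 <= kmod_sq e <= / 1600.
Proof. apply kmod_sq_small, He. Qed.

Lemma residual_one_sub z : U (1 - e ^ 2) z - amp e * sin z = residual e z.
Proof. rewrite U_one_sub by exact He. reflexivity. Qed.

Lemma residual_derive z : is_derive (residual e) z (residual_d1 e z).
Proof.
  unfold residual, residual_d1. auto_derive.
  - apply ex_derive_phase, Hm.
  - replace (Derive (fun x : R => phase (kmod_sq e) x) z)
      with (scale (kmod_sq e) * phase_rate (kmod_sq e) z)
      by (symmetry; apply is_derive_unique, phase_derive, Hm).
    ring.
Qed.

Lemma residual_d1_derive z : is_derive (residual_d1 e) z (residual_d2 e z).
Proof.
  unfold residual_d1, residual_d2. auto_derive.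
  - split; [apply ex_derive_phase, Hm | split; [apply ex_derive_phase_rate, Hm | auto]].
  - replace (Derive (fun x : R => phase (kmod_sq e) x) z)
      with (scale (kmod_sq e) * phase_rate (kmod_sq e) z)
      by (symmetry; apply is_derive_unique, phase_derive, Hm).
    replace (Derive (fun x : R => phase_rate (kmod_sq e) x) z)
      with (- scale (kmod_sq e) * kmod_sq e * sin (phase (kmod_sq e) z) * cos (phase (kmod_sq e) z))
      by (symmetry; apply is_derive_unique, phase_rate_derive, Hm).
    ring.
Qed.

Lemma Derive_residual z : Derive (residual e) z = residual_d1 e z.
Proof. apply is_derive_unique, residual_derive. Qed.

Lemma Derive_n_residual_2 z : Derive_n (residual e) 2 z = residual_d2 e z.
Proof.
  simpl. rewrite (Derive_ext _ (residual_d1 e)) by apply Derive_residual.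
  apply is_derive_unique, residual_d1_derive.
Qed.

Lemma residual_bounds z : 0 <= z <= 2 * PI ->
  Rabs (residual e z) <= 70 * e * kmod_sq e /\ Rabs (residual_d1 e z) <= 70 * e * kmod_sq e
  /\ Rabs (residual_d2 e z) <= 70 * e * kmod_sq e.
Proof.
  intros Hz. pose proof (phase_near_id _ Hm z Hz).
  destruct (scale_bounds _ Hm). destruct (phase_rate_bounds _ Hm z).
  assert (Ha : Rabs (amp e - e) <= 40 * e * kmod_sq e).
  { unfold amp. replace (e * sin_coef (kmod_sq e) - e) with (e * (sin_coef (kmod_sq e) - 1)) by ring.
    rewrite Rabs_mult, (Rabs_right e) by lra.
    replace (40 * e * kmod_sq e) with (e * (40 * kmod_sq e)) by ring.
    apply Rmult_le_compat_l; [lra | apply sin_coef_near_1, Hm]. }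
  split; [| split].
  - apply residual_bound; tauto.
  - apply residual_d1_bound; tauto.
  - apply residual_d2_bound; tauto.
Qed.

Lemma continuous_residual_sqr_sum z :
  continuous (fun z => residual e z ^ 2 + residual_d1 e z ^ 2 + residual_d2 e z ^ 2) z.
Proof.
  apply continuous_of_ex_derive. unfold residual, residual_d1, residual_d2. auto_derive.
  repeat split; auto using ex_derive_phase, ex_derive_phase_rate.
Qed.

Lemma H2per_norm_residual :
  H2per_norm (fun z => U (1 - e ^ 2) z - amp e * sin z) <= 2800 * amp e ^ 3.
Proof.
  pose proof PI_bounds. destruct (kmod_sq_bounds e He) as [_ Hk].
  unfold H2per_norm.
  rewrite (RInt_ext_R _ (fun z => residual e z ^ 2 + residual_d1 e z ^ 2 + residual_d2 e z ^ 2)).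
  2:{ intros z. rewrite (Derive_n_ext _ (residual e)), (Derive_ext _ (residual e))
        by apply residual_one_sub.
      rewrite residual_one_sub, Derive_residual, Derive_n_residual_2. reflexivity. }
  set (M := 70 * e * kmod_sq e).
  assert (HM : 0 <= M) by (unfold M; nra).
  assert (HI : RInt (fun z => residual e z ^ 2 + residual_d1 e z ^ 2 + residual_d2 e z ^ 2) 0 (2 * PI)
               <= (5 * M) ^ 2).
  { eapply Rle_trans; [apply (RInt_le_continuous _ (fun _ => 3 * M ^ 2)) |].
    - lra.
    - apply continuous_residual_sqr_sum.
    - intros; apply continuous_const.
    - intros t Ht. destruct (residual_bounds t Ht) as [A0 [A1 A2]]. fold M in A0, A1, A2.
      apply sqr_le_of_Rabs_le in A0, A1, A2. lra.
    - rewrite RInt_const_R. nra. }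
  eapply Rle_trans; [apply sqrt_le_1_alt, HI |].
  rewrite sqrt_pow2 by lra.
  pose proof (pow_le_amp e 3 He).
  assert (e * kmod_sq e <= e ^ 3) by nra.
  unfold M. lra.
Qed.

End Residual.

Lemma near_one_sub_sqr E : 1 - / 1600 < E < 1 -> exists e, 0 < e < / 40 /\ E = 1 - e ^ 2.
Proof.
  intros HE. exists (sqrt (1 - E)).
  pose proof (pow2_sqrt (1 - E) ltac:(lra)).
  assert (0 < sqrt (1 - E)) by (apply sqrt_lt_R0; lra).
  repeat split; nra.
Qed.

Theorem proposition2p1 :
  exists (delta a0 C : R), 0 < delta /\ 0 < a0 /\ 0 < C /\
    (forall E, 1 - delta < E < 1 -> 0 < acoef E < a0) /\
    (forall E1 E2, 1 - delta < E1 < 1 -> 1 - delta < E2 < 1 ->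
        acoef E1 = acoef E2 -> E1 = E2) /\
    (forall b, 0 < b < a0 -> exists E, 1 - delta < E < 1 /\ acoef E = b) /\
    (forall E, 1 - delta < E < 1 ->
       Rabs (E - (1 - acoef E ^ 2)) <= C * acoef E ^ 4 /\
       Rabs (ell E ^ 2 - (1 - 3 / 4 * acoef E ^ 2)) <= C * acoef E ^ 4 /\
       H2per_norm (fun z => U E z - acoef E * sin z) <= C * acoef E ^ 3).
Proof.
  exists (/ 1600), (amp (/ 40)), 3000.
  destruct (amp_near (/ 40) ltac:(lra)) as [_ Ha0].
  split; [lra | split; [lra | split; [lra | split; [| split; [| split]]]]].
  - intros E HE. destruct (near_one_sub_sqr E HE) as [e [He ->]].
    rewrite acoef_one_sub by lra. destruct (amp_near e ltac:(lra)) as [_ Ha].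
    split; [lra | apply amp_increasing; lra].
  - intros E1 E2 H1 H2.
    destruct (near_one_sub_sqr E1 H1) as [e1 [He1 ->]], (near_one_sub_sqr E2 H2) as [e2 [He2 ->]].
    rewrite !acoef_one_sub by lra. intros Heq. rewrite (amp_injective e1 e2); lra.
  - intros b Hb. destruct (amp_surjective b Hb) as [e [He Hab]].
    exists (1 - e ^ 2). rewrite acoef_one_sub by lra. split; [split; nra | exact Hab].
  - intros E HE. destruct (near_one_sub_sqr E HE) as [e [He ->]].
    assert (He' : 0 < e <= / 40) by lra.
    pose proof (energy_expansion e He'). pose proof (ell_sqr_expansion e He').
    pose proof (H2per_norm_residual e He'). rewrite acoef_one_sub by exact He'.
    destruct (amp_near e He') as [_ Ha].
    assert (0 <= amp e ^ 3) by (apply pow_le; lra).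
    assert (0 <= amp e ^ 4) by (apply pow_le; lra).
    repeat split; lra.
Qed.
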